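(* Let $m,j,k$ be positive integers. Suppose that the outcome class of $G_{m,j}$ is $H$ and that the outcome class of $G_{m,k}$ is $H$ or $2$. Then there exists $N_0$ such that for all integers $N\ge N_0$, the outcome class of $G_{m,N\gcd(j,k)}$ is $H$.
   Context: Domineering is a two-player game played on a rectangular grid of unit squares. The players alternate placing dominoes, each covering two adjacent unoccupied squares; the player Vertical must place dominoes vertically (covering two squares in the same column), and the player Horizontal must place them horizontally (covering two squares in the same row). A player with no legal move on her turn loses. $G_{m,n}$ denotes the empty board with vertical dimension $m$ (number of rows) and horizontal dimension $n$ (number of columns). Every position has one of four outcome classes under optimal play: $V$ (Vertical wins whoever moves first), $H$ (Horizontal wins whoever moves first), $1$ (the player who moves first wins), $2$ (the player who moves second wins). *)

(* Domineering on an m x n board. *)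
From mathcomp Require Import all_boot.
Set Implicit Arguments. Unset Strict Implicit. Unset Printing Implicit Defensive.

Definition cell (m n : nat) := ('I_m * 'I_n)%type.

Definition vadj m n (a b : cell m n) : bool :=
  (a.2 == b.2) && (a.1.+1 == b.1 :> nat).
Definition hadj m n (a b : cell m n) : bool :=
  (a.1 == b.1) && (a.2.+1 == b.2 :> nat).

(* wins_fuel f vert E : the player to move (Vertical if vert, else Horizontal)
   wins from the position whose set of empty cells is E, computed with
   recursion depth f.  With f > #|E| the value is the true game value, since
   each move removes two empty cells. *)
Fixpoint wins_fuel m n (f : nat) (vert : bool) (E : {set cell m n}) : bool :=
  match f with
  | 0 => false
  | f'.+1 =>
      [exists ab : cell m n * cell m n,
        [&& (if vert then vadj ab.1 ab.2 else hadj ab.1 ab.2),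
            ab.1 \in E, ab.2 \in E &
            ~~ wins_fuel f' (~~ vert) ((E :\ ab.1) :\ ab.2)]]
  end.

Definition first_wins m n (vert : bool) (E : {set cell m n}) : bool :=
  wins_fuel #|E|.+1 vert E.

Inductive outcome := OutV | OutH | Out1 | Out2.

Definition outcome_of m n (E : {set cell m n}) : outcome :=
  match first_wins true E, first_wins false E with
  | true, true => Out1
  | true, false => OutV
  | false, true => OutH
  | false, false => Out2
  end.

(* Outcome class of the empty board G_{m,n}: m rows, n columns. *)
Definition outcomeG (m n : nat) : outcome := outcome_of [set: cell m n].

From mathcomp Require Import all_boot.
From mathcomp Require Import zify.
Set Implicit Arguments. Unset Strict Implicit. Unset Printing Implicit Defensive.

(* Call two positions vertically separated when no cell of one equals or is
   vertically adjacent to a cell of the other.  If Vertical, moving first,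
   loses on B, then joining B to a separated A preserves both "Vertical loses
   moving first" and "Horizontal wins moving first": Horizontal answers every
   move of Vertical in the component where it was played, and Vertical has no
   move straddling the two.  Placing the boards G_{m,a} and G_{m,b} side by
   side gives G_{m,a+b}, whose only straddling dominoes are horizontal.  Hence
   the widths n with G_{m,n} of class H contain j and are closed under adding
   j or k, and every large multiple of gcd(j,k) is (x+1)j + yk. *)

Section Positions.
Variables m n : nat.
Implicit Types (A B E : {set cell m n}) (x y : cell m n).

Lemma card_setD2_lt E x y : x \in E -> #|E :\ x :\ y| < #|E|.
Proof.
move=> Ex; rewrite [#|E|](cardsD1 x) Ex add1n ltnS.
by apply: subset_leq_card; apply: subD1set.
Qed.

Lemma wins_fuel_stable f g v E :
  #|E| < f -> #|E| < g -> wins_fuel f v E = wins_fuel g v E.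
Proof.
elim: f g v E => [|f IH] [|g] v E //=; rewrite ?ltn0 // !ltnS => Ef Eg.
apply: eq_existsb => xy; have [Ex|] := boolP (xy.1 \in E); last by rewrite !andbF.
have lt := card_setD2_lt xy.2 Ex.
by rewrite (IH g) //; apply: leq_trans lt _.
Qed.

Lemma first_winsE v E : first_wins v E =
  [exists xy : cell m n * cell m n,
    [&& (if v then vadj xy.1 xy.2 else hadj xy.1 xy.2),
        xy.1 \in E, xy.2 \in E &
        ~~ first_wins (~~ v) (E :\ xy.1 :\ xy.2)]].
Proof.
rewrite /first_wins /=; apply: eq_existsb => xy.
have [Ex|] := boolP (xy.1 \in E); last by rewrite !andbF.
by rewrite (@wins_fuel_stable _ #|E :\ xy.1 :\ xy.2|.+1) // card_setD2_lt.
Qed.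

Lemma first_wins0 v : first_wins v (set0 : {set cell m n}) = false.
Proof. by rewrite first_winsE; apply/existsP => -[xy]; rewrite inE andbF. Qed.

Definition vsep A B := forall x y, x \in A -> y \in B ->
  [&& x != y, ~~ vadj x y & ~~ vadj y x].

Lemma vsep_sym A B : vsep A B -> vsep B A.
Proof. by move=> sAB x y Ax By; case/and3P: (sAB y x By Ax); rewrite eq_sym => -> -> ->. Qed.

Lemma vsep_setD2 A B x y : vsep A B -> vsep (A :\ x :\ y) B.
Proof. by move=> sAB u v; rewrite !inE => /and3P[_ _]; apply: sAB. Qed.

Lemma setUD2l A B x y : vsep A B -> x \in A -> y \in A ->
  (A :|: B) :\ x :\ y = A :\ x :\ y :|: B.
Proof.
move=> sAB Ax Ay; apply/setP => z; rewrite !inE.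
case Bz: (z \in B); rewrite ?orbT ?orbF ?andbT //.
case/andP: (sAB x z Ax Bz) => xz _; case/andP: (sAB y z Ay Bz) => yz _.
by rewrite (eq_sym z x) (eq_sym z y) xz yz.
Qed.

Lemma first_wins_reply v E x y : ~~ first_wins v E ->
  (if v then vadj x y else hadj x y) -> x \in E -> y \in E ->
  first_wins (~~ v) (E :\ x :\ y).
Proof.
rewrite first_winsE negb_exists => /forallP/(_ (x, y)) /= lose xy Ex Ey.
by move: lose; rewrite xy Ex Ey negbK.
Qed.

Lemma first_wins_vsepU_size s A B : #|A| + #|B| <= s -> vsep A B ->
  (~~ first_wins true A -> ~~ first_wins true B -> ~~ first_wins true (A :|: B)) /\
  (first_wins false A -> ~~ first_wins true B -> first_wins false (A :|: B)).
Proof.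
elim: s A B => [|s IH] A B sizeAB sAB.
  have [-> ->] : A = set0 /\ B = set0 by split; apply: cards0_eq; lia.
  by rewrite setU0 !first_wins0.
have IHD A' B' x y : #|A'| + #|B'| <= s.+1 -> vsep A' B' -> x \in A' -> y \in A' ->
    (~~ first_wins true (A' :\ x :\ y) -> ~~ first_wins true B' ->
       ~~ first_wins true ((A' :|: B') :\ x :\ y)) /\
    (first_wins false (A' :\ x :\ y) -> ~~ first_wins true B' ->
       first_wins false ((A' :|: B') :\ x :\ y)).
  move=> sizeA'B' sA'B' A'x A'y; rewrite setUD2l //.
  apply: IH; last exact: vsep_setD2.
  by have := card_setD2_lt y A'x; lia.
split=> [VA VB | HA VB].
- apply/negP; rewrite first_winsE => /existsP[[x y] /= /and4P[xy]].
  rewrite !inE => /orP[Ax|Bx] /orP[Ay|By]; apply/negP; rewrite negbK.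
  + have [_ ->] // := IHD A B x y sizeAB sAB Ax Ay.
    exact: first_wins_reply VA xy Ax Ay.
  + by case/and3P: (sAB x y Ax By) => _ /negP.
  + by case/and3P: (sAB y x Ay Bx) => _ _ /negP.
  + have sizeBA : #|B| + #|A| <= s.+1 by rewrite addnC.
    rewrite setUC; have [_ ->] // := IHD B A x y sizeBA (vsep_sym sAB) Bx By.
    exact: first_wins_reply VB xy Bx By.
- move: HA; rewrite !first_winsE => /existsP[[x y] /= /and4P[xy Ax Ay VA']].
  apply/existsP; exists (x, y); rewrite /= !inE xy Ax Ay /=.
  by have [-> //] := IHD A B x y sizeAB sAB Ax Ay.
Qed.

End Positions.

Lemma imsetD1 (aT rT : finType) (f : aT -> rT) (E : {set aT}) a :
  injective f -> f @: (E :\ a) = f @: E :\ f a.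
Proof.
move=> inj_f; apply/setP => z; rewrite !inE.
apply/imsetP/andP => [[x Ex ->]|[za /imsetP[x Ex zfx]]]; last subst z.
  by move: Ex; rewrite !inE (inj_eq inj_f) => /andP[-> Ex]; rewrite imset_f.
by rewrite (inj_eq inj_f) in za; exists x; rewrite // !inE za.
Qed.

Section Embedding.
Variables (m w n : nat) (f : cell m w -> cell m n).
Hypotheses (inj_f : injective f)
  (f_vadj : forall x y, vadj (f x) (f y) = vadj x y)
  (f_hadj : forall x y, hadj (f x) (f y) = hadj x y).

Lemma wins_fuel_imset fuel v (E : {set cell m w}) : wins_fuel fuel v (f @: E) = wins_fuel fuel v E.
Proof.
elim: fuel v E => [|fuel IH] v E //=.
have adj_f x y : (if v then vadj (f x) (f y) else hadj (f x) (f y)) =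
                 (if v then vadj x y else hadj x y) by case: v.
apply/existsP/existsP => -[[x y] /= /and4P[xy]].
  move=> /imsetP[x' Ex' ex] /imsetP[y' Ey' ey] win; subst x y.
  move: xy win; rewrite adj_f -!imsetD1 // IH => xy win.
  by exists (x', y'); rewrite /= xy Ex' Ey'.
move=> Ex Ey win.
by exists (f x, f y); rewrite /= adj_f xy !imset_f // -!imsetD1 // IH win.
Qed.

Lemma first_wins_imset v (E : {set cell m w}) : first_wins v (f @: E) = first_wins v E.
Proof. by rewrite /first_wins card_imset // wins_fuel_imset. Qed.

End Embedding.

Section Concatenation.
Variables m a b : nat.

Definition cell_lshift (c : cell m a) : cell m (a + b) := (c.1, lshift b c.2).
Definition cell_rshift (c : cell m b) : cell m (a + b) := (c.1, rshift a c.2).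

Lemma cell_lshift_inj : injective cell_lshift.
Proof. by move=> [i c] [i' c'] [-> /val_inj ->]. Qed.

Lemma cell_rshift_inj : injective cell_rshift.
Proof. by move=> [i c] [i' c'] [-> /addnI /val_inj ->]. Qed.

Lemma vadj_lshift x y : vadj (cell_lshift x) (cell_lshift y) = vadj x y.
Proof. by rewrite /vadj /= (inj_eq (@lshift_inj _ _)). Qed.

Lemma hadj_lshift x y : hadj (cell_lshift x) (cell_lshift y) = hadj x y.
Proof. by []. Qed.

Lemma vadj_rshift x y : vadj (cell_rshift x) (cell_rshift y) = vadj x y.
Proof. by rewrite /vadj /= (inj_eq (@rshift_inj _ _)). Qed.

Lemma hadj_rshift x y : hadj (cell_rshift x) (cell_rshift y) = hadj x y.
Proof. by rewrite /hadj /= -addnS eqn_add2l. Qed.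

Lemma setT_cell_add :
  [set: cell m (a + b)] = cell_lshift @: setT :|: cell_rshift @: setT.
Proof.
apply/setP => -[i c]; rewrite !inE -(splitK c); symmetry.
by case: (split c) => [c'|c'] /=; apply/orP; [left|right]; apply/imsetP; exists (i, c').
Qed.

Lemma vsep_lshift_rshift : vsep (cell_lshift @: setT) (cell_rshift @: setT).
Proof.
move=> _ _ /imsetP[[i c] _ ->] /imsetP[[i' c'] _ ->].
have lr : (lshift b c == rshift a c') = false.
  by rewrite -val_eqE /=; apply/eqP; have := ltn_ord c; lia.
by rewrite /vadj /= xpair_eqE lr (eq_sym (rshift a c')) lr !andbF.
Qed.

Lemma first_wins_board_add :
  (~~ first_wins true [set: cell m a] -> ~~ first_wins true [set: cell m b] ->
     ~~ first_wins true [set: cell m (a + b)]) /\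
  (first_wins false [set: cell m a] -> ~~ first_wins true [set: cell m b] ->
     first_wins false [set: cell m (a + b)]).
Proof.
have fwL := first_wins_imset cell_lshift_inj vadj_lshift hadj_lshift.
have fwR := first_wins_imset cell_rshift_inj vadj_rshift hadj_rshift.
by rewrite setT_cell_add -(fwL true) -(fwL false) -(fwR true);
  apply: first_wins_vsepU_size (leqnn _) vsep_lshift_rshift.
Qed.

End Concatenation.

Lemma outcome_ofH m n (E : {set cell m n}) :
  outcome_of E = OutH <-> first_wins false E /\ ~~ first_wins true E.
Proof.
by rewrite /outcome_of; case: (first_wins true E); case: (first_wins false E);
  split=> // -[].
Qed.

Lemma outcome_ofH2 m n (E : {set cell m n}) :
  outcome_of E = OutH \/ outcome_of E = Out2 -> ~~ first_wins true E.
Proof.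
by rewrite /outcome_of; case: (first_wins true E); case: (first_wins false E) => -[].
Qed.

Lemma outcomeG_addH m a b : outcomeG m a = OutH ->
  ~~ first_wins true [set: cell m b] -> outcomeG m (a + b) = OutH.
Proof.
move=> /outcome_ofH[Ha Va] Vb; have [addV addH] := first_wins_board_add m a b.
by apply/outcome_ofH; split; [exact: addH | exact: addV].
Qed.

Lemma muln_gcd_comb j k N : 0 < j -> 0 < k -> 2 * j * k <= N ->
  exists x y, N * gcdn j k = x.+1 * j + y * k.
Proof.
move=> j_gt0 k_gt0 N_ge.
have [u v Bezout _] := egcdnP k j_gt0.
have r_lt : (N * u) %% k < k by rewrite ltn_pmod.
have NuE := divn_eq (N * u) k.
move: NuE r_lt; set q := _ %/ k; set r := _ %% k => NuE r_lt.
have NgE : q * j * k + r * j = N * v * k + N * gcdn j k.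
  have : N * u * j = N * (v * k + gcdn j k) by rewrite -Bezout mulnA.
  by rewrite NuE; nia.
have rj_lt : r * j < k * j by rewrite ltn_pmul2r.
have g_gt0 : 0 < gcdn j k by rewrite gcdn_gt0 j_gt0.
have qj_gt : N * v + j < q * j by rewrite -(ltn_pmul2r k_gt0); nia.
exists (r + k).-1, (q * j - N * v - j).
have -> : (r + k).-1.+1 = r + k by lia.
nia.
Qed.

Theorem proposition3p2 (m j k : nat) :
  0 < m -> 0 < j -> 0 < k ->
  outcomeG m j = OutH ->
  (outcomeG m k = OutH \/ outcomeG m k = Out2) ->
  exists N0 : nat, forall N : nat, N0 <= N -> outcomeG m (N * gcdn j k) = OutH.
Proof.
move=> _ j_gt0 k_gt0 Hj /outcome_ofH2 Vk.
have Vj : ~~ first_wins true [set: cell m j] by case/outcome_ofH: Hj.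
have Hcomb x y : outcomeG m (x.+1 * j + y * k) = OutH.
  elim: y => [|y IHy]; last by rewrite [y.+1 * k]mulSnr addnA; apply: outcomeG_addH.
  rewrite mul0n addn0; elim: x => [|x IHx]; first by rewrite mul1n.
  by rewrite mulSnr; apply: outcomeG_addH.
exists (2 * j * k) => N N_ge.
by have [x [y ->]] := muln_gcd_comb j_gt0 k_gt0 N_ge.
Qed.
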